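(* There exist absolute constants $c>0$ and $k_0$ such that for all integers $k\ge k_0$, all $\varepsilon\in(0,1)$ and all $\delta\in(0,1/4)$, the $(\varepsilon,\delta)$-sample complexity of estimating the Shannon entropy $H(\vec p)=\sum_{i=1}^k p_i\log\frac1{p_i}$ over $\Delta_k$ satisfies \[ C_H(\varepsilon,\delta)\ge c\,\log\frac1\delta\cdot\frac{\log^2 k}{\varepsilon^2}. \]
   Context: $\Delta_k$ is the set of probability distributions $\vec p=(p_1,\dots,p_k)$ on $[k]=\{1,\dots,k\}$; $\log$ is the natural logarithm. An estimator is any map $\hat f:[k]^*\to\mathbb{R}$ from finite sequences over $[k]$. For a property $f:\Delta_k\to\mathbb{R}$, the $(\varepsilon,\delta)$-sample complexity is \[ C_f(\varepsilon,\delta):=\min_{\hat f}\min\{n:\ \Pr_{X^n\sim\vec p}(|\hat f(X^n)-f(\vec p)|>\varepsilon)\le\delta\ \ \forall\vec p\in\Delta_k\}, \] where $X^n$ denotes $n$ i.i.d. samples from $\vec p$. *)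

From Stdlib Require Import Reals List.
Import ListNotations.
Open Scope R_scope.

(* The alphabet [k] is represented by {0,...,k-1}. *)

Definition sum_range (k : nat) (f : nat -> R) : R :=
  fold_right Rplus 0 (map f (seq 0 k)).

(* p : nat -> R is a probability distribution on [k] (values outside [k] are irrelevant). *)
Definition is_dist (k : nat) (p : nat -> R) : Prop :=
  (forall i, (i < k)%nat -> 0 <= p i) /\ sum_range k p = 1.

Definition entropy (k : nat) (p : nat -> R) : R :=
  sum_range k (fun i => if Rlt_dec 0 (p i) then p i * ln (/ p i) else 0).

Fixpoint all_seqs (k n : nat) : list (list nat) :=
  match n with
  | O => [ [] ]
  | S m => flat_map (fun s => map (fun i => i :: s) (seq 0 k)) (all_seqs k m)
  end.

Definition seq_prob (p : nat -> R) (s : list nat) : R :=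
  fold_right (fun i acc => p i * acc) 1 s.

Definition estimator := list nat -> R.

Definition err_prob (k n : nat) (fh : estimator) (target : R) (p : nat -> R) (eps : R) : R :=
  fold_right Rplus 0
    (map (fun s => if Rlt_dec eps (Rabs (fh s - target)) then seq_prob p s else 0)
         (all_seqs k n)).

Definition achieves (k : nat) (f : (nat -> R) -> R) (fh : estimator) (n : nat) (eps delta : R) : Prop :=
  forall p, is_dist k p -> err_prob k n fh (f p) p eps <= delta.

(* C_f(eps,delta) >= b  (with C_f = +infinity if no (fh,n) works):
   every estimator/sample-size pair that achieves (eps,delta) has n >= b. *)
Definition sample_complexity_ge (k : nat) (f : (nat -> R) -> R) (eps delta b : R) : Prop :=
  forall (fh : estimator) (n : nat), achieves k f fh n eps delta -> b <= INR n.

From Stdlib Require Import Reals Lra Lia List.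
Import ListNotations.
Open Scope R_scope.

(** Le Cam's two-point method.  Take [k = K + 1] and the distributions
    [p = (1/2 - s, (1/2 + s)/K, ..., (1/2 + s)/K)] and [q] with [1/2 - s] and
    [1/2 + s] swapped, where [s = 2 eps / ln K].  Their entropies differ by
    [2 s ln K = 4 eps], so an [(eps, delta)]-estimator distinguishes [p^n] from
    [q^n] with error probability at most [2 delta].  Via Cauchy-Schwarz this
    bounds the Bhattacharyya coefficient of the product measures,
    [(1 - 4 s^2)^(n/2)], by [sqrt (4 delta (1 - delta))], and taking logarithms
    gives [n >= c ln(1/delta) ln^2 K / eps^2]. *)

Definition sum_list {T} (f : T -> R) (l : list T) : R := fold_right Rplus 0 (map f l).

Lemma sum_list_nil {T} (f : T -> R) : sum_list f [] = 0.
Proof. reflexivity. Qed.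

Lemma sum_list_cons {T} (f : T -> R) x l : sum_list f (x :: l) = f x + sum_list f l.
Proof. reflexivity. Qed.

Lemma sum_list_app {T} (f : T -> R) l1 l2 :
  sum_list f (l1 ++ l2) = sum_list f l1 + sum_list f l2.
Proof.
  induction l1 as [|x l1 IH]; simpl app; rewrite ?sum_list_nil, ?sum_list_cons, ?IH; ring.
Qed.

Lemma sum_list_add {T} (f g : T -> R) l :
  sum_list (fun x => f x + g x) l = sum_list f l + sum_list g l.
Proof. induction l as [|x l IH]; rewrite ?sum_list_nil, ?sum_list_cons, ?IH; ring. Qed.

Lemma sum_list_mult_l {T} (f : T -> R) c l : sum_list (fun x => c * f x) l = c * sum_list f l.
Proof. induction l as [|x l IH]; rewrite ?sum_list_nil, ?sum_list_cons, ?IH; ring. Qed.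

Lemma sum_list_ext {T} (f g : T -> R) l :
  (forall x, f x = g x) -> sum_list f l = sum_list g l.
Proof.
  intros H; induction l as [|x l IH]; [reflexivity | rewrite !sum_list_cons, IH, H; ring].
Qed.

Lemma sum_list_le {T} (f g : T -> R) l :
  (forall x, f x <= g x) -> sum_list f l <= sum_list g l.
Proof.
  intros H; induction l as [|x l IH]; rewrite ?sum_list_nil, ?sum_list_cons;
    [lra | specialize (H x); lra].
Qed.

Lemma sum_list_nonneg {T} (f : T -> R) l : (forall x, 0 <= f x) -> 0 <= sum_list f l.
Proof.
  intros H; induction l as [|x l IH]; rewrite ?sum_list_nil, ?sum_list_cons;
    [lra | specialize (H x); lra].
Qed.

Lemma sum_list_flat_map {T U} (f : U -> R) (g : T -> list U) l :
  sum_list f (flat_map g l) = sum_list (fun x => sum_list f (g x)) l.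
Proof.
  induction l as [|x l IH]; cbn [flat_map];
    [reflexivity | rewrite sum_list_app, sum_list_cons, IH; ring].
Qed.

Lemma sum_list_map {T U} (f : U -> R) (h : T -> U) l :
  sum_list f (map h l) = sum_list (fun x => f (h x)) l.
Proof. unfold sum_list; rewrite map_map; reflexivity. Qed.

Lemma sum_list_Cauchy_Schwarz {T} (f g : T -> R) l :
  sum_list (fun x => f x * g x) l ^ 2 <=
  sum_list (fun x => f x ^ 2) l * sum_list (fun x => g x ^ 2) l.
Proof.
  induction l as [|x l IH]; rewrite ?sum_list_nil, ?sum_list_cons; [simpl; lra|].
  set (S := sum_list (fun x => f x * g x) l) in *.
  set (A := sum_list (fun x => f x ^ 2) l) in *.
  set (B := sum_list (fun x => g x ^ 2) l) in *.
  assert (HA : 0 <= A) by (apply sum_list_nonneg; intros; apply pow2_ge_0).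
  assert (HB : 0 <= B) by (apply sum_list_nonneg; intros; apply pow2_ge_0).
  (* [|S| <= sqrt A sqrt B], and then [2 a b S <= a^2 B + b^2 A] by AM-GM. *)
  assert (HS : Rabs S <= sqrt A * sqrt B).
  { rewrite <- sqrt_Rsqr_abs, <- sqrt_mult by lra.
    apply sqrt_le_1_alt; unfold Rsqr; lra. }
  set (a := f x); set (b := g x).
  assert (Hab : 2 * (a * b * S) <= a ^ 2 * B + b ^ 2 * A).
  { pose proof (Rle_abs (a * b * S)); rewrite !Rabs_mult in *.
    pose proof (Rabs_pos a); pose proof (Rabs_pos b).
    pose proof (sqrt_sqrt A HA); pose proof (sqrt_sqrt B HB).
    pose proof (pow2_ge_0 (Rabs a * sqrt B - Rabs b * sqrt A)).
    rewrite <- (pow2_abs a), <- (pow2_abs b).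
    assert (Rabs a * Rabs b * Rabs S <= Rabs a * Rabs b * (sqrt A * sqrt B))
      by (apply Rmult_le_compat_l; [apply Rmult_le_pos|]; auto).
    nra. }
  nra.
Qed.

Lemma seq_prob_nonneg p s : (forall i, 0 <= p i) -> 0 <= seq_prob p s.
Proof.
  intros Hp; induction s as [|i s IH]; simpl; [lra | apply Rmult_le_pos; auto].
Qed.

Lemma sqrt_seq_prob_mult p q s : (forall i, 0 <= p i) -> (forall i, 0 <= q i) ->
  sqrt (seq_prob p s * seq_prob q s) = seq_prob (fun i => sqrt (p i * q i)) s.
Proof.
  intros Hp Hq; induction s as [|i s IH]; simpl; [rewrite Rmult_1_r; apply sqrt_1|].
  rewrite <- IH, <- sqrt_mult by (apply Rmult_le_pos; auto using seq_prob_nonneg).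
  f_equal; ring.
Qed.

Lemma sum_seq_prob_all_seqs p k n :
  sum_list (seq_prob p) (all_seqs k n) = sum_range k p ^ n.
Proof.
  induction n as [|n IH]; [simpl; unfold sum_list; simpl; ring|].
  cbn [all_seqs]; rewrite sum_list_flat_map.
  rewrite (sum_list_ext _ (fun s => sum_range k p * seq_prob p s)).
  - rewrite sum_list_mult_l, IH; simpl; ring.
  - intros s; rewrite sum_list_map.
    rewrite (sum_list_ext _ (fun i => seq_prob p s * p i)) by (intros; apply Rmult_comm).
    rewrite sum_list_mult_l; unfold sum_range; fold (sum_list p (seq 0 k)); ring.
Qed.

Definition bhattacharyya (k : nat) (p q : nat -> R) : R :=
  sum_range k (fun i => sqrt (p i * q i)).

Lemma bhattacharyya_all_seqs p q k n : (forall i, 0 <= p i) -> (forall i, 0 <= q i) ->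
  sum_list (fun s => sqrt (seq_prob p s * seq_prob q s)) (all_seqs k n) =
  bhattacharyya k p q ^ n.
Proof.
  intros Hp Hq; unfold bhattacharyya; rewrite <- sum_seq_prob_all_seqs.
  apply sum_list_ext; intros s; apply sqrt_seq_prob_mult; auto.
Qed.

(* [sum sqrt(PQ) = sum sqrt(min) sqrt(max)] and [sum max = 2 - m]; then
   Cauchy-Schwarz. *)
Lemma sum_sqrt_mult_sq_le_overlap {T} (P Q : T -> R) l :
  (forall x, 0 <= P x) -> (forall x, 0 <= Q x) ->
  sum_list P l = 1 -> sum_list Q l = 1 ->
  let m := sum_list (fun x => Rmin (P x) (Q x)) l in
  sum_list (fun x => sqrt (P x * Q x)) l ^ 2 <= m * (2 - m).
Proof.
  intros HP HQ HsP HsQ m.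
  assert (Hmin : forall x, 0 <= Rmin (P x) (Q x)) by (intros; apply Rmin_glb; auto).
  assert (Hmax : forall x, 0 <= Rmax (P x) (Q x))
    by (intros; eapply Rle_trans; [apply Hmin | apply Rminmax]).
  rewrite (sum_list_ext _ (fun x => sqrt (Rmin (P x) (Q x)) * sqrt (Rmax (P x) (Q x)))).
  2:{ intros x; rewrite <- sqrt_mult by auto; f_equal.
      unfold Rmin, Rmax; destruct Rle_dec; ring. }
  eapply Rle_trans; [apply sum_list_Cauchy_Schwarz|].
  rewrite (sum_list_ext _ (fun x => Rmin (P x) (Q x))) by (intros; apply pow2_sqrt; auto).
  rewrite (sum_list_ext (fun x => sqrt _ ^ 2) (fun x => P x + Q x - Rmin (P x) (Q x))).
  2:{ intros x; rewrite pow2_sqrt by auto; unfold Rmin, Rmax; destruct Rle_dec; ring. }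
  fold m; apply Rmult_le_compat_l; [apply sum_list_nonneg; auto|].
  unfold Rminus; rewrite !sum_list_add, HsP, HsQ.
  rewrite (sum_list_ext (fun x => - _) (fun x => -1 * Rmin (P x) (Q x))) by (intros; ring).
  rewrite sum_list_mult_l; fold m; lra.
Qed.

Lemma overlap_le_err_prob_add k n fh a b p q eps :
  (forall i, 0 <= p i) -> (forall i, 0 <= q i) -> 2 * eps < Rabs (a - b) ->
  sum_list (fun s => Rmin (seq_prob p s) (seq_prob q s)) (all_seqs k n) <=
  err_prob k n fh a p eps + err_prob k n fh b q eps.
Proof.
  intros Hp Hq Hab; unfold err_prob.
  eapply Rle_trans; [| right; apply sum_list_add]; apply sum_list_le; intros s.
  pose proof (Rmin_l (seq_prob p s) (seq_prob q s)).
  pose proof (Rmin_r (seq_prob p s) (seq_prob q s)).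
  pose proof (seq_prob_nonneg p s Hp); pose proof (seq_prob_nonneg q s Hq).
  destruct (Rlt_dec eps (Rabs (fh s - a))) as [Ea|Ea];
  destruct (Rlt_dec eps (Rabs (fh s - b))) as [Eb|Eb]; try lra.
  pose proof (Rabs_triang (a - fh s) (fh s - b)) as Htri.
  replace (a - fh s + (fh s - b)) with (a - b) in Htri by ring.
  rewrite (Rabs_minus_sym a (fh s)) in Htri; lra.
Qed.

Lemma two_point_bhattacharyya_bound k f fh n eps delta p q :
  (forall i, 0 <= p i) -> sum_range k p = 1 ->
  (forall i, 0 <= q i) -> sum_range k q = 1 ->
  2 * eps < Rabs (f p - f q) -> delta <= 1/2 ->
  achieves k f fh n eps delta ->
  bhattacharyya k p q ^ (2 * n) <= 4 * delta * (1 - delta).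
Proof.
  intros Hp Hsp Hq Hsq Hpq Hdelta Hach.
  assert (Herr_p := Hach p (conj (fun i _ => Hp i) Hsp)).
  assert (Herr_q := Hach q (conj (fun i _ => Hq i) Hsq)).
  pose proof (overlap_le_err_prob_add k n fh _ _ p q eps Hp Hq Hpq) as Hm.
  pose proof (sum_sqrt_mult_sq_le_overlap (seq_prob p) (seq_prob q) (all_seqs k n)
    (fun s => seq_prob_nonneg p s Hp) (fun s => seq_prob_nonneg q s Hq)) as HB.
  rewrite !sum_seq_prob_all_seqs, Hsp, Hsq, pow1, bhattacharyya_all_seqs in HB by auto.
  specialize (HB eq_refl eq_refl); cbv zeta in HB.
  set (m := sum_list _ (all_seqs k n)) in *.
  assert (Hm0 : 0 <= m) by (apply sum_list_nonneg; intros; apply Rmin_glb;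
    apply seq_prob_nonneg; auto).
  assert (Hm2 : m <= 2 * delta) by lra.
  (* [m (2 - m)] is increasing on [0, 1]. *)
  rewrite Nat.mul_comm, pow_mult.
  nra.
Qed.

Lemma sum_list_seq_const (f : nat -> R) c m n : (forall i, (m <= i)%nat -> f i = c) ->
  sum_list f (seq m n) = INR n * c.
Proof.
  revert m; induction n as [|n IH]; intros m Hf; [simpl; unfold sum_list; simpl; ring|].
  cbn [seq]; rewrite sum_list_cons, (IH (S m)) by (intros; apply Hf; lia).
  rewrite Hf, S_INR by lia; ring.
Qed.

Lemma sum_range_S_const_tail (g : nat -> R) k c : (forall i, (1 <= i)%nat -> g i = c) ->
  sum_range (S k) g = g 0%nat + INR k * c.
Proof.
  intros Hg; change (sum_range (S k) g) with (sum_list g (0%nat :: seq 1 k)).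
  rewrite sum_list_cons, (sum_list_seq_const _ c); auto.
Qed.

Definition spike (K a : R) (i : nat) : R := if Nat.eqb i 0 then a else (1 - a) / K.

Section Spike.
Variable k : nat.
Let K := INR k.
Hypothesis K_gt0 : 0 < K.

Lemma spike_nonneg a i : 0 <= a <= 1 -> 0 <= spike K a i.
Proof.
  intros Ha; unfold spike; destruct (Nat.eqb i 0); [lra|].
  apply Rmult_le_pos; [lra | left; apply Rinv_0_lt_compat; lra].
Qed.

Lemma sum_range_spike a : sum_range (S k) (spike K a) = 1.
Proof.
  rewrite (sum_range_S_const_tail _ k ((1 - a) / K)).
  - unfold spike; simpl; fold K; field; lra.
  - intros [|i] Hi; [lia | reflexivity].
Qed.

Lemma entropy_spike a : 0 < a < 1 ->
  entropy (S k) (spike K a) = - a * ln a - (1 - a) * ln (1 - a) + (1 - a) * ln K.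
Proof.
  intros Ha; unfold entropy.
  rewrite (sum_range_S_const_tail _ k ((1 - a) / K * ln (/ ((1 - a) / K)))).
  - unfold spike; cbn [Nat.eqb]; destruct (Rlt_dec 0 a) as [_|]; [|lra].
    replace (/ ((1 - a) / K)) with (K * / (1 - a)) by (field; lra).
    rewrite ln_Rinv, ln_mult, ln_Rinv by (try apply Rinv_0_lt_compat; lra).
    fold K; field; lra.
  - intros [|i] Hi; [lia|]; unfold spike; cbn [Nat.eqb].
    destruct (Rlt_dec 0 ((1 - a) / K)) as [_|Hneg]; [reflexivity|].
    exfalso; apply Hneg, Rdiv_lt_0_compat; lra.
Qed.

Lemma entropy_spike_sub a : 0 < a < 1 ->
  entropy (S k) (spike K a) - entropy (S k) (spike K (1 - a)) = (1 - 2 * a) * ln K.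
Proof.
  intros Ha; rewrite !entropy_spike by lra.
  replace (1 - (1 - a)) with a by ring; ring.
Qed.

Lemma bhattacharyya_spike a b : 0 <= a <= 1 -> 0 <= b <= 1 ->
  bhattacharyya (S k) (spike K a) (spike K b) = sqrt (a * b) + sqrt ((1 - a) * (1 - b)).
Proof.
  intros Ha Hb; unfold bhattacharyya.
  rewrite (sum_range_S_const_tail _ k (sqrt ((1 - a) * (1 - b)) / K)).
  - unfold spike; cbn [Nat.eqb]; fold K; field; lra.
  - intros [|i] Hi; [lia|]; unfold spike; cbn [Nat.eqb].
    replace ((1 - a) / K * ((1 - b) / K)) with ((1 - a) * (1 - b) * (/ K) ^ 2)
      by (field; lra).
    rewrite sqrt_mult, sqrt_pow2 by (try apply pow2_ge_0;
      try (left; apply Rinv_0_lt_compat); nra).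
    reflexivity.
Qed.

End Spike.

Lemma ln_le_compat x y : 0 < x -> x <= y -> ln x <= ln y.
Proof. intros Hx [Hxy | ->]; [left; apply ln_increasing | right]; auto. Qed.

Lemma ln_le_sub_1 x : 0 < x -> ln x <= x - 1.
Proof. intros Hx; pose proof (exp_ineq1_le (ln x)); rewrite exp_ln in *; lra. Qed.

Lemma ln_pos_of_gt1 x : 1 < x -> 0 < ln x.
Proof. intros Hx; rewrite <- ln_1; apply ln_increasing; lra. Qed.

Lemma neg_ln_1_sub_le x : 0 <= x <= 1/2 -> - ln (1 - x) <= 2 * x.
Proof.
  intros Hx; rewrite <- ln_Rinv by lra.
  eapply Rle_trans; [apply ln_le_sub_1, Rinv_0_lt_compat; lra|].
  apply (Rmult_le_reg_r (1 - x)); [lra|].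
  replace ((/ (1 - x) - 1) * (1 - x)) with x by (field; lra); nra.
Qed.

(* For [delta <= 1/16] use [4 (1 - delta) <= 4 <= sqrt (/ delta)]; otherwise
   [ln (/ delta) <= ln 16 <= 10 ln (4/3)] and [4 delta (1 - delta) <= 3/4]. *)
Lemma ln_inv_le_neg_ln_4_mul_sub delta : 0 < delta < 1/4 ->
  ln (/ delta) / 10 <= - ln (4 * delta * (1 - delta)).
Proof.
  intros Hd.
  assert (Hinv16 : 16 = / (1/16)) by field.
  assert (Hln4 : 0 < ln 4) by (apply ln_pos_of_gt1; lra).
  assert (Hln16 : ln 16 = 2 * ln 4) by (replace 16 with (4 * 4) by ring; rewrite ln_mult; lra).
  destruct (Rle_dec delta (1/16)) as [Hsmall|Hlarge].
  - rewrite ln_Rinv by lra.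
    replace (4 * delta * (1 - delta)) with (delta * (4 * (1 - delta))) by ring.
    rewrite ln_mult by lra.
    assert (ln (4 * (1 - delta)) <= ln 4) by (apply ln_le_compat; lra).
    assert (ln 16 <= ln (/ delta))
      by (apply ln_le_compat; [lra | rewrite Hinv16; apply Rinv_le_contravar; lra]).
    rewrite ln_Rinv in * by lra; lra.
  - assert (ln (4 * delta * (1 - delta)) <= ln (3/4)) by (apply ln_le_compat; nra).
    assert (ln (/ delta) <= ln 16)
      by (apply ln_le_compat;
          [apply Rinv_0_lt_compat; lra | rewrite Hinv16; apply Rinv_le_contravar; lra]).
    assert (ln 16 <= 10 * ln (4/3)).
    { replace 10 with (INR 10) by (simpl; ring).
      rewrite <- ln_pow by lra; apply ln_le_compat; [lra | simpl; lra]. }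
    assert (ln (3/4) = - ln (4/3)) by (rewrite <- ln_Rinv by lra; f_equal; field).
    lra.
Qed.

Lemma entropy_sample_size_lower_bound k eps delta fh n :
  6 <= ln (INR k) -> 0 < eps < 1 -> 0 < delta < 1/4 ->
  achieves (S k) (entropy (S k)) fh n eps delta ->
  ln (/ delta) * ln (INR k) ^ 2 <= 320 * eps ^ 2 * INR n.
Proof.
  intros HL Heps Hdelta Hach.
  set (K := INR k) in *; set (L := ln K) in *.
  assert (HK : 0 < K).
  { unfold L, ln in HL; destruct (Rlt_dec 0 K); [assumption | lra]. }
  set (s := 2 * eps / L).
  assert (Hs : 0 < s < 1/3).
  { unfold s; split; [apply Rdiv_lt_0_compat; lra|].
    apply (Rmult_lt_reg_r L); [lra|]; unfold Rdiv; rewrite Rmult_assoc, Rinv_l; lra. }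
  set (u := 1/2 - s); set (x := 4 * s ^ 2).
  assert (Hx : 0 < x <= 1/2) by (unfold x; nra).
  assert (Hgap : 2 * eps < Rabs (entropy (S k) (spike K u) - entropy (S k) (spike K (1 - u)))).
  { rewrite entropy_spike_sub by (auto; unfold u; lra); fold K L.
    replace ((1 - 2 * u) * L) with (4 * eps) by (unfold u, s; field; lra).
    rewrite Rabs_right; lra. }
  pose proof (two_point_bhattacharyya_bound (S k) _ fh n eps delta _ _
    (fun i => spike_nonneg k HK u i ltac:(unfold u; lra)) (sum_range_spike k HK u)
    (fun i => spike_nonneg k HK (1 - u) i ltac:(unfold u; lra)) (sum_range_spike k HK (1 - u))
    Hgap ltac:(lra) Hach) as Hpow.
  rewrite bhattacharyya_spike in Hpow by (auto; unfold u; lra).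
  replace (sqrt (u * (1 - u)) + sqrt ((1 - u) * (1 - (1 - u)))) with (sqrt (1 - x)) in Hpow.
  2:{ replace ((1 - u) * (1 - (1 - u))) with (u * (1 - u)) by ring.
      replace (1 - x) with (2 ^ 2 * (u * (1 - u))) by (unfold x, u; field).
      rewrite sqrt_mult, sqrt_pow2 by (unfold u; nra); ring. }
  rewrite pow_mult, pow2_sqrt in Hpow by lra.
  assert (Hln : INR n * ln (1 - x) <= ln (4 * delta * (1 - delta))).
  { rewrite <- ln_pow by lra; apply ln_le_compat; [apply pow_lt; lra | exact Hpow]. }
  pose proof (ln_inv_le_neg_ln_4_mul_sub delta Hdelta) as Hdelta_ln.
  pose proof (neg_ln_1_sub_le x ltac:(lra)) as Hx_ln.
  assert (Hnx : ln (/ delta) / 10 <= INR n * (2 * x)) by (pose proof (pos_INR n); nra).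
  replace (INR n * (2 * x)) with (32 * eps ^ 2 * INR n / L ^ 2) in Hnx
    by (unfold x, s; field; lra).
  apply (Rmult_le_compat_r (10 * L ^ 2)) in Hnx; [|nra].
  replace (ln (/ delta) / 10 * (10 * L ^ 2)) with (ln (/ delta) * L ^ 2) in Hnx by field.
  replace (32 * eps ^ 2 * INR n / L ^ 2 * (10 * L ^ 2)) with (320 * eps ^ 2 * INR n) in Hnx
    by (field; lra).
  exact Hnx.
Qed.

Lemma ln_S_le_double_ln x : 2 <= x -> ln (x + 1) <= 2 * ln x.
Proof.
  intros Hx; replace (2 * ln x) with (ln (x * x)) by (rewrite ln_mult; lra).
  apply ln_le_compat; nra.
Qed.

Theorem theorem2 :
  exists (c : R) (k0 : nat), 0 < c /\
    forall (k : nat) (eps delta : R),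
      (k0 <= k)%nat -> 0 < eps < 1 -> 0 < delta < 1/4 ->
      sample_complexity_ge k (entropy k) eps delta
        (c * ln (/ delta) * ((ln (INR k)) ^ 2 / eps ^ 2)).
Proof.
  exists (/ 1280), 4098%nat; split; [lra|].
  intros k eps delta Hk Heps Hdelta fh n Hach.
  destruct k as [|k]; [lia|].
  assert (HK : 4097 <= INR k) by (replace 4097 with (INR 4097) by (simpl; ring);
    apply le_INR; lia).
  (* [ln 2 > 1/2] gives [ln (2^12) > 6]. *)
  assert (HL : 6 <= ln (INR k)).
  { pose proof ln_lt_2.
    assert (ln (2 ^ 12) <= ln (INR k)) by (apply ln_le_compat; simpl; lra).
    rewrite ln_pow in * by lra; simpl INR in *; lra. }
  pose proof (entropy_sample_size_lower_bound k eps delta fh n HL Heps Hdelta Hach) as Hn.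
  assert (HD : 0 < ln (/ delta))
    by (apply ln_pos_of_gt1; rewrite <- Rinv_1; apply Rinv_lt_contravar; lra).
  rewrite S_INR.
  pose proof (ln_S_le_double_ln (INR k) ltac:(lra)) as Hdouble.
  assert (Hk_ln : 0 <= ln (INR k + 1)) by (left; apply ln_pos_of_gt1; lra).
  apply (Rmult_le_reg_r (eps ^ 2)); [nra|].
  replace (/ 1280 * ln (/ delta) * (ln (INR k + 1) ^ 2 / eps ^ 2) * eps ^ 2)
    with (ln (/ delta) * ln (INR k + 1) ^ 2 / 1280) by (field; lra).
  assert (Hdouble_sq : ln (INR k + 1) ^ 2 <= 4 * ln (INR k) ^ 2) by nra.
  nra.
Qed.
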